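(* An L-state $\rho\in\mathscr L$ is an X-state if and only if its Bloch vector $(\rho_I)_{\emptyset\ne I}\in\bigoplus_{\emptyset\ne I}\mathscr V_I$ lies in $X(\mathfrak B)$ for some longitudinal system $\mathfrak B$.
   Context: Let $V_1,\dots,V_n$ be two-dimensional complex vector spaces, $\mathscr V_i=\mathfrak{sl}(V_i)$ with the form $\langle A,B\rangle=\tfrac12\operatorname{tr}(AB)$, and $\mathscr L$ the set of trace-one endomorphisms of $V_1\otimes\cdots\otimes V_n$. An X-state is a $\rho\in\mathscr L$ for which there exist ordered bases $\{e^i_0,e^i_1\}$ of the $V_i$ such that $\rho$ maps the span of the basis tensors $e^1_{\phi(1)}\otimes\cdots\otimes e^n_{\phi(n)}$ ($\phi:\{1,\dots,n\}\to\{0,1\}$) with $\sum\phi(i)$ even into itself, and the span of those with $\sum\phi(i)$ odd into itself. Bloch vector: for $\emptyset\ne I=\{i_1<\dots<i_k\}$, $\mathscr V_I=\mathscr V_{i_1}\otimes\cdots\otimes\mathscr V_{i_k}$ is regarded inside $\mathrm{End}(V_1\otimes\cdots\otimes V_n)$ by tensoring with identities on the other factors; each $\rho\in\mathscr L$ is uniquely $\rho=2^{-n}\mathrm{id}+\sum_{\emptyset\ne I}\rho_I$ with $\rho_I\in\mathscr V_I$. A longitudinal system $\mathfrak B=(\mathscr V_1^\ell,\dots,\mathscr V_n^\ell)$ consists of lines $\mathscr V_i^\ell\subseteq\mathscr V_i$ spanned by vectors $v$ with $\langle v,v\rangle\neq0$; $\mathscr V_i^t=(\mathscr V_i^\ell)^\perp$.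 $\mathscr V_I^e$ is the span of tensors $x_{i_1}\otimes\cdots\otimes x_{i_k}$ with each $x_{i_j}\in\mathscr V_{i_j}^\ell$ or $x_{i_j}\in\mathscr V_{i_j}^t$ and an even number of them transversal; $X(\mathfrak B)=\bigoplus_{\emptyset\ne I}\mathscr V_I^e$. *)

From HB Require Import structures.
From mathcomp Require Import all_boot all_order all_algebra.
From mathcomp Require Export complex.
From mathcomp Require Export reals.
Set Implicit Arguments.
Unset Strict Implicit.
Unset Printing Implicit Defensive.
Import GRing.Theory Num.Theory.
Local Open Scope ring_scope.

Section Defs.
Variable C : fieldType.
Variable n : nat.

(* Each V_i is C^2 with its standard basis; a basis tensor of
   V_1 (x) ... (x) V_n (standard basis) is indexed by phi : {0..n-1} -> {0,1}. *)
Definition idx := {ffun 'I_n -> 'I_2}.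
Definition vec := idx -> C.
(* endomorphisms of V_1 (x) ... (x) V_n, as matrices w.r.t. the standard basis *)
Definition op := idx * idx -> C.

Definition span (T : Type) (S : (T -> C) -> Prop) (f : T -> C) : Prop :=
  exists (m : nat) (c : 'I_m -> C) (s : 'I_m -> T -> C),
    (forall k, S (s k)) /\ forall t, f t = \sum_(k < m) c k * s k t.

Definition op_apply (A : op) (v : vec) : vec :=
  fun chi => \sum_(psi : idx) A (chi, psi) * v psi.

Definition optrace (A : op) : C := \sum_(phi : idx) A (phi, phi).

Definition idop : op := fun p => (p.1 == p.2)%:R.

Definition L_state (rho : op) : Prop := optrace rho = 1.

Definition parity (phi : idx) : bool := odd (\sum_(i < n) (nat_of_ord (phi i))).

(* Ordered bases of the V_i: P i is an invertible 2x2 matrix whose columns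
   are e^i_0, e^i_1.  basis_tensor P phi = e^1_{phi 1} (x) ... (x) e^n_{phi n}. *)
Definition basis_tensor (P : 'I_n -> 'M[C]_2) (phi : idx) : vec :=
  fun chi => \prod_(i < n) P i (chi i) (phi i).

Definition parity_span (P : 'I_n -> 'M[C]_2) (b : bool) : vec -> Prop :=
  span (fun v => exists phi, parity phi = b /\ v = basis_tensor P phi).

Definition is_X_state (rho : op) : Prop :=
  exists P : 'I_n -> 'M[C]_2, (forall i, P i \in unitmx) /\
    forall (b : bool) (v : vec), parity_span P b v -> parity_span P b (op_apply rho v).

Definition sl2 (x : 'M[C]_2) : Prop := \tr x = 0.
Definition form (x y : 'M[C]_2) : C := \tr (x *m y) / 2%:R.

(* x_{i_1} (x) ... (x) x_{i_k} for I = {i_1<...<i_k}, regarded in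
   End(V_1 (x) ... (x) V_n) by tensoring with identities outside I *)
Definition emb_tensor (I : {set 'I_n}) (x : 'I_n -> 'M[C]_2) : op :=
  fun p => \prod_(i < n)
             (if i \in I then x i (p.1 i) (p.2 i) else (p.1 i == p.2 i)%:R).

Definition V_I (I : {set 'I_n}) : op -> Prop :=
  span (fun A => exists x, (forall i, i \in I -> sl2 (x i)) /\ A = emb_tensor I x).

(* A longitudinal system: V_i^l = span (v i), with <v i, v i> <> 0 *)
Definition longitudinal (v : 'I_n -> 'M[C]_2) : Prop :=
  forall i, sl2 (v i) /\ form (v i) (v i) != 0.
Definition long_line (u x : 'M[C]_2) : Prop := exists a : C, x = a *: u.
Definition trans_space (u x : 'M[C]_2) : Prop := sl2 x /\ form x u = 0.

Definition V_I_e (v : 'I_n -> 'M[C]_2) (I : {set 'I_n}) : op -> Prop :=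
  span (fun A => exists (x : 'I_n -> 'M[C]_2) (T : {set 'I_n}),
          [/\ T \subset I, ~~ odd #|T|,
              (forall i, i \in I ->
                 if i \in T then trans_space (v i) (x i) else long_line (v i) (x i))
            & A = emb_tensor I x]).

Definition bloch_vector (rho : op) (r : {set 'I_n} -> op) : Prop :=
  (forall I, I != set0 -> V_I I (r I)) /\
  forall p, rho p = (2%:R ^- n) * idop p + \sum_(I : {set 'I_n} | I != set0) r I p.

Definition in_X (v : 'I_n -> 'M[C]_2) (r : {set 'I_n} -> op) : Prop :=
  forall I, I != set0 -> V_I_e v I (r I).

End Defs.

(* Conjugating by the product of the basis changes, an X-state becomes an operator
   whose matrix has no entry between basis tensors of different parity.  Writing
   rho = sum_q rho_q E_q and splitting every factor of the matrix unit
   E_q = (x)_i E_(q1 i, q2 i) as E_ab = (E_ab - d_ab/2 1) + d_ab/2 1 computes the Bloch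
   vector: the traceless part of E_aa is +-Z/2 with Z = diag(1, -1), and for a <> b it
   is orthogonal to Z.  Hence the V_I-component of E_q has its transversal factors
   exactly where q1 and q2 differ, an even number of places when q1 and q2 have the
   same parity; conversely such tensors only connect basis tensors of equal parity.
   Bloch vectors are unique because the V_I form a direct sum, conjugation transports
   all these notions, and every traceless v with <v, v> <> 0 is conjugate to a
   nonzero multiple of Z, which reduces any longitudinal system to (Z, ..., Z). *)

From Pilot Require Import Defs.
From HB Require Import structures.
From mathcomp Require Import all_boot all_order all_algebra.
From mathcomp Require Import complex reals.
From mathcomp Require Import ring.
From Stdlib Require Import FunctionalExtensionality.
Set Implicit Arguments.
Unset Strict Implicit.
Unset Printing Implicit Defensive.
Import GRing.Theory Num.Theory.
Local Open Scope ring_scope.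

Local Notation span := Defs.span.
Local Notation form := Defs.form.

Section Span.
Variables (C : fieldType) (T : Type) (S : (T -> C) -> Prop).

Lemma span0 : span S (fun _ => 0).
Proof.
by exists 0%N, (fun _ => 0), (fun _ _ => 0); split=> [[]|t]; rewrite ?big_ord0.
Qed.

Lemma span1 g : S g -> span S g.
Proof.
by move=> Sg; exists 1%N, (fun _ => 1), (fun _ => g); split=> // t; rewrite big_ord1 mul1r.
Qed.

Lemma span_ext f g : f =1 g -> span S f -> span S g.
Proof. by move=> fg [m [c [s [Ss ef]]]]; exists m, c, s; split=> // t; rewrite -fg. Qed.

Lemma span_sub S' f : (forall g, S g -> S' g) -> span S f -> span S' f.
Proof. by move=> SS' [m [c [s [Ss ef]]]]; exists m, c, s; split=> // k; apply: SS'. Qed.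

Lemma span_eq0 f : f =1 (fun _ => 0) -> span S f.
Proof. by move=> f0; apply: span_ext span0 => t; rewrite f0. Qed.

Lemma spanD f g : span S f -> span S g -> span S (fun t => f t + g t).
Proof.
move=> [m1 [c1 [s1 [Ss1 ef]]]] [m2 [c2 [s2 [Ss2 eg]]]].
pose pick X (x1 : 'I_m1 -> X) (x2 : 'I_m2 -> X) k :=
  match split k with inl i => x1 i | inr j => x2 j end.
exists (m1 + m2)%N, (pick _ c1 c2), (pick _ s1 s2); split.
  by move=> k; rewrite /pick; case: (split k).
move=> t; rewrite big_split_ord ef eg /pick.
congr (_ + _); apply: eq_bigr => i _.
  by have := unsplitK (inl i : 'I_m1 + 'I_m2) => /= ->.
by have := unsplitK (inr i : 'I_m1 + 'I_m2) => /= ->.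
Qed.

Lemma spanZ a f : span S f -> span S (fun t => a * f t).
Proof.
move=> [m [c [s [Ss ef]]]]; exists m, (fun k => a * c k), s; split=> // t.
by rewrite ef big_distrr; apply: eq_bigr => k _; rewrite /= mulrA.
Qed.

Lemma span_sum (K : Type) (r : seq K) (P : pred K) (g : K -> T -> C) :
  (forall k, P k -> span S (g k)) -> span S (fun t => \sum_(k <- r | P k) g k t).
Proof.
move=> Sg; elim: r => [|k r IH]; first by apply: span_eq0 => t; rewrite big_nil.
case Pk: (P k); last by apply: span_ext IH => t; rewrite big_cons Pk.
by apply: span_ext (spanD (Sg k Pk) IH) => t; rewrite big_cons Pk.
Qed.

Lemma span_eval0 t f : (forall g, S g -> g t = 0) -> span S f -> f t = 0.
Proof.
by move=> S0 [m [c [s [Ss ->]]]]; rewrite big1 // => k _; rewrite S0 ?mulr0.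
Qed.

End Span.

Section SpanFinite.
Variables (C : fieldType) (T : finType).

Lemma span_kernel (U : Type) (K : U -> T -> C) S S' f :
  (forall g, S g -> span S' (fun u => \sum_t K u t * g t)) ->
  span S f -> span S' (fun u => \sum_t K u t * f t).
Proof.
move=> SK [m [c [s [Ss ef]]]].
have SKs (k : 'I_m) : true -> span S' (fun u => c k * \sum_t K u t * s k t).
  by move=> _; apply: spanZ; apply: SK.
apply: span_ext (span_sum _ SKs) => u /=.
under [RHS]eq_bigr do rewrite ef big_distrr.
rewrite exchange_big; apply: eq_bigr => k _; rewrite big_distrr /=.
by apply: eq_bigr => t _; rewrite mulrCA.
Qed.

Lemma span_pair S (W : T -> C) t0 (k : C) f :
  (forall g, S g -> \sum_t g t * W t = k * g t0) ->
  span S f -> \sum_t f t * W t = k * f t0.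
Proof.
move=> SW [m [c [s [Ss ef]]]]; rewrite ef.
under eq_bigr do rewrite ef big_distrl /=.
rewrite exchange_big big_distrr; apply: eq_bigr => i _ /=.
by rewrite mulrCA -SW // big_distrr /=; apply: eq_bigr => t _; rewrite mulrA.
Qed.

End SpanFinite.

Section Matrix2.
Variable C : fieldType.

Lemma ord2_cases (a : 'I_2) : a = 0 \/ a = 1.
Proof. by case: a => [[|[|//]]] ?; [left|right]; apply: val_inj. Qed.

Lemma sum_ord2 (F : 'I_2 -> C) : \sum_i F i = F 0 + F 1.
Proof. by rewrite big_ord_recr big_ord1; congr (F _ + F _); apply: val_inj. Qed.

Lemma mxtrace2 (A : 'M[C]_2) : \tr A = A 0 0 + A 1 1.
Proof. exact: sum_ord2. Qed.

Lemma mulmx2E (A B : 'M[C]_2) i j : (A *m B) i j = A i 0 * B 0 j + A i 1 * B 1 j.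
Proof. by rewrite mxE sum_ord2. Qed.

Definition mx2 (a b c d : C) : 'M[C]_2 :=
  \matrix_(i, j) if i == 0 then (if j == 0 then a else b) else (if j == 0 then c else d).

Lemma mx2_eta (A : 'M[C]_2) : A = mx2 (A 0 0) (A 0 1) (A 1 0) (A 1 1).
Proof.
by apply/matrixP => i j; rewrite mxE; case: (ord2_cases i) => ->; case: (ord2_cases j) => ->.
Qed.

Lemma mx2_traceless_sqr a b c :
  mx2 a b c (- a) *m mx2 a b c (- a) = (a ^+ 2 + b * c)%:M.
Proof.
apply/matrixP => i j; rewrite mulmx2E !mxE.
by case: (ord2_cases i) => ->; case: (ord2_cases j) => -> /=; ring.
Qed.

Definition mx_pair (A B : 'M[C]_2) : C := \sum_a \sum_b A a b * B a b.

Lemma mx_pairC : commutative mx_pair.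
Proof.
move=> A B; rewrite /mx_pair; apply: eq_bigr => a _.
by apply: eq_bigr => b _; rewrite mulrC.
Qed.

Lemma mx_pair1r x : mx_pair x 1%:M = \tr x.
Proof.
rewrite /mx_pair mxtrace2 !sum_ord2 !mxE /=.
by rewrite !mulr1 !mulr0 addr0 add0r.
Qed.

Definition pauliZ : 'M[C]_2 := mx2 1 0 0 (-1).

End Matrix2.

Section MatrixConjugation.
Variables (C : fieldType) (m : nat) (P Q : 'M[C]_m.+1).
Hypothesis PQ : P *m Q = 1%:M.

Lemma mxtrace_conj x : \tr (P *m x *m Q) = \tr x.
Proof. by rewrite mxtrace_mulC mulmxA (mulmx1C PQ) mul1mx. Qed.

Lemma mulmx_conj x y : (P *m x *m Q) *m (P *m y *m Q) = P *m (x *m y) *m Q.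
Proof. by rewrite !mulmxA -(mulmxA _ Q P) (mulmx1C PQ) mulmx1 -(mulmxA P x y). Qed.

End MatrixConjugation.

Lemma form_conj (C : fieldType) (P Q x y : 'M[C]_2) : P *m Q = 1%:M ->
  form (P *m x *m Q) (P *m y *m Q) = form x y.
Proof. by move=> PQ; rewrite /form mulmx_conj // mxtrace_conj. Qed.

Section TensorOperators.
Variables (C : fieldType) (n : nat).
Local Notation idx := (idx n).
Local Notation op := (op C n).
Local Notation idop := (@idop C n).

Definition tensor_op (a : 'I_n -> 'M[C]_2) : op := fun p => \prod_i a i (p.1 i) (p.2 i).

Definition op_mul (A B : op) : op := fun p => \sum_(a : idx) A (p.1, a) * B (a, p.2).

Lemma tensor_op_mul a b : op_mul (tensor_op a) (tensor_op b) = tensor_op (fun i => a i *m b i).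
Proof.
apply: functional_extensionality => -[x y]; rewrite /op_mul /tensor_op /=.
rewrite (eq_bigr (fun f : idx => \prod_i (a i (x i) (f i) * b i (f i) (y i)))).
  rewrite -(bigA_distr_bigA (fun i j => a i (x i) j * b i j (y i))) /=.
  by apply: eq_bigr => i _; rewrite mxE.
by move=> f _; rewrite big_split.
Qed.

Lemma prod_eq_idx (x y : idx) : \prod_i ((x i == y i)%:R : C) = (x == y)%:R.
Proof.
have [->|neq_xy] := eqVneq x y; first by apply: big1 => i _; rewrite eqxx.
have [i neq_i] : exists i, x i != y i.
  apply/existsP; apply: contraR neq_xy => /existsPn eq_xy.
  by apply/eqP/ffunP => i; apply/eqP/negPn.
by rewrite (bigD1 i) //= (negbTE neq_i) mul0r.
Qed.

Lemma idop_tensor : idop = tensor_op (fun _ => 1%:M).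
Proof.
apply: functional_extensionality => -[x y]; rewrite /idop /tensor_op /= -prod_eq_idx.
by apply: eq_bigr => i _; rewrite mxE.
Qed.

Lemma emb_tensorE I x : emb_tensor I x = tensor_op (fun i => if i \in I then x i else 1%:M).
Proof.
apply: functional_extensionality => p; apply: eq_bigr => i _.
by case: ifP => // _; rewrite mxE.
Qed.

Lemma op_mulA : associative op_mul.
Proof.
move=> A B D; apply: functional_extensionality => -[x y]; rewrite /op_mul /=.
under [RHS]eq_bigr do rewrite big_distrl /=.
rewrite [RHS]exchange_big; apply: eq_bigr => a _; rewrite big_distrr /=.
by apply: eq_bigr => b _; rewrite mulrA.
Qed.

Lemma op_mul1l : left_id idop op_mul.
Proof.
move=> A; apply: functional_extensionality => -[x y]; rewrite /op_mul /idop /=.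
rewrite (bigD1 x) //= eqxx mul1r big1 ?addr0 // => a /negbTE.
by rewrite eq_sym => ->; rewrite mul0r.
Qed.

Lemma op_mul1r : right_id idop op_mul.
Proof.
move=> A; apply: functional_extensionality => -[x y]; rewrite /op_mul /idop /=.
by rewrite (bigD1 y) //= eqxx mulr1 big1 ?addr0 // => a /negbTE ->; rewrite mulr0.
Qed.

Lemma optrace_mulC A B : optrace (op_mul A B) = optrace (op_mul B A).
Proof.
rewrite /optrace /op_mul /= exchange_big; apply: eq_bigr => a _.
by apply: eq_bigr => b _; rewrite mulrC.
Qed.

Definition op_pair (A W : op) : C := \sum_p A p * W p.

Lemma op_pair_tensor a w :
  op_pair (tensor_op a) (tensor_op w) = \prod_i mx_pair (a i) (w i).
Proof.
rewrite /op_pair /tensor_op (eq_bigr (fun p : idx * idx =>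
   \prod_i (a i (p.1 i) (p.2 i) * w i (p.1 i) (p.2 i)))); last by move=> p _; rewrite big_split.
rewrite -(pair_bigA _ (fun x y : idx => \prod_i (a i (x i) (y i) * w i (x i) (y i)))) /=.
under eq_bigr => x _ do rewrite -(bigA_distr_bigA (fun i b => a i (x i) b * w i (x i) b)).
by rewrite -(bigA_distr_bigA (fun i c => \sum_b a i c b * w i c b)).
Qed.

Lemma tensor_op_inv M N : (forall i, M i *m N i = 1%:M) ->
  op_mul (tensor_op M) (tensor_op N) = idop.
Proof.
by move=> MN; rewrite tensor_op_mul idop_tensor (functional_extensionality _ _ MN).
Qed.

Definition op_conj (M N : 'I_n -> 'M[C]_2) (A : op) : op :=
  op_mul (op_mul (tensor_op M) A) (tensor_op N).

Lemma op_conjE M N A : op_conj M N A =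
  fun p => \sum_(q : idx * idx) tensor_op M (p.1, q.1) * tensor_op N (q.2, p.2) * A q.
Proof.
apply: functional_extensionality => -[x y]; rewrite /op_conj /op_mul /=.
rewrite [RHS](eq_bigr (fun q => tensor_op M (x, q.1) * tensor_op N (q.2, y) * A (q.1, q.2))).
  rewrite -(pair_bigA _ (fun a b => tensor_op M (x, a) * tensor_op N (b, y) * A (a, b))).
  rewrite exchange_big; apply: eq_bigr => b _; rewrite big_distrl.
  by apply: eq_bigr => a _; rewrite mulrAC.
by case.
Qed.

Lemma op_conj_tensor M N a :
  op_conj M N (tensor_op a) = tensor_op (fun i => M i *m a i *m N i).
Proof. by rewrite /op_conj !tensor_op_mul. Qed.

Lemma span_op_conj M N S S' A :
  (forall g, S g -> span S' (op_conj M N g)) -> span S A -> span S' (op_conj M N A).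
Proof.
rewrite op_conjE => SS'; apply: span_kernel => g Sg.
by have := SS' g Sg; rewrite op_conjE.
Qed.

Definition parity_even (A : op) := forall x y, parity x != parity y -> A (x, y) = 0.

Definition preserves_parity (P : 'I_n -> 'M[C]_2) (rho : op) :=
  forall b v, parity_span P b v -> parity_span P b (op_apply rho v).

Lemma odd_card_diff (x y : idx) : parity x (+) parity y = odd #|[set i | x i != y i]|.
Proof.
rewrite /parity -oddD -big_split /=.
have xyE i : (x i + y i = (x i != y i) + (x i * y i).*2)%N.
  by case: (ord2_cases (x i)) => ->; case: (ord2_cases (y i)) => ->.
rewrite (eq_bigr _ (fun i _ => xyE i)) big_split /= oddD.
have -> : (\sum_i (x i * y i).*2 = (\sum_i x i * y i).*2)%N.
  by rewrite -muln2 big_distrl /=; apply: eq_bigr => i _; rewrite muln2.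
rewrite odd_double addbF -sum1_card; congr odd; rewrite [RHS]big_mkcond /=.
by apply: eq_bigr => i _; rewrite inE; case: (x i != y i).
Qed.

Lemma bloch_parity_even rho r : bloch_vector rho r ->
  (forall I, I != set0 -> parity_even (r I)) -> parity_even rho.
Proof.
move=> [_ er] even_r x y neq_par; rewrite er big1 => [|I I0]; last exact: even_r.
rewrite addr0 /idop /=; have [eq_xy|] := eqVneq x y; last by rewrite mulr0.
by move: neq_par; rewrite eq_xy eqxx.
Qed.

Section BasisChange.
Variables P Q : 'I_n -> 'M[C]_2.
Hypothesis PQ : forall i, P i *m Q i = 1%:M.

Lemma op_conj_emb I x :
  op_conj P Q (emb_tensor I x) = emb_tensor I (fun i => P i *m x i *m Q i).
Proof.
rewrite !emb_tensorE op_conj_tensor; congr tensor_op.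
by apply: functional_extensionality => i; case: ifP => // _; rewrite mulmx1.
Qed.

Lemma op_conj_id : op_conj P Q idop = idop.
Proof.
rewrite idop_tensor op_conj_tensor; congr tensor_op.
by apply: functional_extensionality => i; rewrite mulmx1.
Qed.

Lemma op_conjK A : op_conj P Q (op_conj Q P A) = A.
Proof.
by rewrite /op_conj !op_mulA tensor_op_inv // op_mul1l -op_mulA tensor_op_inv // op_mul1r.
Qed.

Lemma optrace_conj A : optrace (op_conj Q P A) = optrace A.
Proof. by rewrite /op_conj optrace_mulC op_mulA tensor_op_inv // op_mul1l. Qed.

Lemma V_I_conj I A : V_I I A -> V_I I (op_conj P Q A).
Proof.
apply: span_op_conj => _ [x [slx ->]]; rewrite op_conj_emb; apply: span1.
by exists (fun i => P i *m x i *m Q i); split=> // i iI; rewrite /sl2 mxtrace_conj ?slx.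
Qed.

Lemma bloch_vector_conj rho r :
  bloch_vector rho r -> bloch_vector (op_conj P Q rho) (fun I => op_conj P Q (r I)).
Proof.
move=> [Vr er]; split=> [I I0|p]; first exact: V_I_conj (Vr I I0).
have -> : idop p = op_conj P Q idop p by rewrite op_conj_id.
rewrite !op_conjE.
under eq_bigr do rewrite er mulrDr mulrCA big_distrr /=.
rewrite big_split /= -big_distrr /= exchange_big /=.
by congr (_ + _); apply: eq_bigr => I _; rewrite op_conjE.
Qed.

Lemma V_I_e_conj v I A :
  V_I_e v I A -> V_I_e (fun i => P i *m v i *m Q i) I (op_conj P Q A).
Proof.
apply: span_op_conj => _ [x [T [subTI evenT xvT ->]]]; rewrite op_conj_emb; apply: span1.
exists (fun i => P i *m x i *m Q i), T; split=> // i iI; move: (xvT i iI).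
case: ifP => _ => [[slx xv]|[a ->]]; last by exists a; rewrite -scalemxAr -scalemxAl.
by split; rewrite ?form_conj // /sl2 mxtrace_conj.
Qed.

(* With e_phi := basis_tensor P phi, the entry (Q rho P)(x, y) is the e_x-coordinate
   of rho e_y. *)
Lemma preserves_parity_even rho :
  preserves_parity P rho -> parity_even (op_conj Q P rho).
Proof.
move=> presP x y neq_xy.
have QP i : Q i *m P i = 1%:M by apply: mulmx1C.
have basis_y : parity_span P (parity y) (basis_tensor P y) by apply: span1; exists y.
have [m [c [s [Ss rho_y]]]] := presP _ _ basis_y.
have rhoP a : op_mul rho (tensor_op P) (a, y) = \sum_(k < m) c k * s k a := rho_y a.
rewrite /op_conj -op_mulA {1}/op_mul /=.
under eq_bigr do rewrite rhoP big_distrr /=.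
rewrite exchange_big; apply: big1 => k _; have [phi [par_phi ->]] := Ss k.
transitivity (c k * op_mul (tensor_op Q) (tensor_op P) (x, phi)).
  by rewrite big_distrr; apply: eq_bigr => a _; rewrite mulrCA.
rewrite tensor_op_inv // /idop /=; case: eqVneq => [eq_x|]; last by rewrite mulr0.
by move: neq_xy; rewrite eq_x par_phi eqxx.
Qed.

Lemma even_preserves_parity rho :
  parity_even (op_conj Q P rho) -> preserves_parity P rho.
Proof.
move=> even_s b v; rewrite /op_apply.
apply: (span_kernel (K := fun chi psi => rho (chi, psi))) => _ [phi [<- ->]].
have rhoP : op_mul rho (tensor_op P) = op_mul (tensor_op P) (op_conj Q P rho).
  by rewrite /op_conj !op_mulA tensor_op_inv // op_mul1l.
have -> : (fun chi => \sum_psi rho (chi, psi) * basis_tensor P phi psi) =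
          (fun chi => \sum_psi op_conj Q P rho (psi, phi) * basis_tensor P psi chi).
  apply: functional_extensionality => chi.
  rewrite -[LHS]/(op_mul rho (tensor_op P) (chi, phi)) rhoP.
  by apply: eq_bigr => psi _; rewrite mulrC.
apply: span_sum => psi _; have [<-|neq_psi] := eqVneq (parity psi) (parity phi).
  by apply: spanZ; apply: span1; exists psi.
by apply: span_eq0 => chi; rewrite even_s ?mul0r // eq_sym.
Qed.

End BasisChange.

Lemma V_I_e_scale (l : 'I_n -> C) v I A : (forall i, l i != 0) ->
  V_I_e (fun i => l i *: v i) I A -> V_I_e v I A.
Proof.
move=> l_neq0; apply: span_sub => _ [x [T [subTI evenT xvT ->]]].
exists x, T; split=> // i iI; move: (xvT i iI).
case: ifP => _ => [[slx xlv]|[a ->]]; last by exists (a * l i); rewrite scalerA.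
split=> //; move: xlv; rewrite /form -scalemxAr mxtraceZ -mulrA => /eqP.
by rewrite mulf_eq0 (negbTE (l_neq0 i)) => /eqP.
Qed.

End TensorOperators.

Section Bloch.
Variables (C : fieldType) (n : nat).
Hypothesis two_neq0 : (2%:R : C) != 0.
Local Notation idx := (idx n).
Local Notation op := (op C n).
Local Notation idop := (@idop C n).
Local Notation pauliZ := (@pauliZ C).

Definition traceless_delta (a b : 'I_2) : 'M[C]_2 :=
  delta_mx a b - ((a == b)%:R / 2%:R) *: 1%:M.

Definition traceless_tensor (q : idx * idx) (I : {set 'I_n}) : op :=
  emb_tensor I (fun i => traceless_delta (q.1 i) (q.2 i)).

Definition diag_weight (q : idx * idx) (I : {set 'I_n}) : C :=
  \prod_(i | i \notin I) ((q.1 i == q.2 i)%:R / 2%:R).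

Definition bloch_of (rho : op) (I : {set 'I_n}) : op :=
  fun p => \sum_(q : idx * idx) rho q * diag_weight q I * traceless_tensor q I p.

Lemma traceless_delta_tr a b : \tr (traceless_delta a b) = 0.
Proof.
rewrite mxtrace2 !mxE.
by case: (ord2_cases a) => ->; case: (ord2_cases b) => -> /=; field.
Qed.

Lemma matrix_unit_expand (p q : idx * idx) :
  (p == q)%:R = \sum_(J : {set 'I_n}) diag_weight q J * traceless_tensor q J p.
Proof.
have -> : (p == q)%:R = \prod_i (delta_mx (q.1 i) (q.2 i) : 'M[C]_2) (p.1 i) (p.2 i).
  under eq_bigr do rewrite mxE -mulnb natrM.
  rewrite big_split /= !prod_eq_idx -natrM mulnb.
  by case: p q => [x y] [x' y']; rewrite xpair_eqE.
under eq_bigr => i _ do rewrite -[delta_mx _ _](subrK (((q.1 i == q.2 i)%:R / 2%:R) *: 1%:M)).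
under eq_bigr => i _ do rewrite mxE [X in _ + X]mxE [1%:M _ _]mxE.
rewrite bigA_distr; apply: eq_bigr => J _.
rewrite /diag_weight [X in _ = X * _]big_mkcond -big_split /=; apply: eq_bigr => i _.
by case: ifP => _; rewrite ?mul1r.
Qed.

Lemma optraceE (rho : op) : optrace rho = \sum_(q : idx * idx) rho q * (q.1 == q.2)%:R.
Proof.
rewrite (eq_bigr (fun q => rho (q.1, q.2) * (q.1 == q.2)%:R)); last by case.
rewrite -(pair_bigA _ (fun x y => rho (x, y) * (x == y)%:R)); apply: eq_bigr => x _.
rewrite (bigD1 x) //= eqxx mulr1 big1 ?addr0 // => y /negbTE.
by rewrite eq_sym => ->; rewrite mulr0.
Qed.

Lemma bloch_of_bloch_vector rho : L_state rho -> bloch_vector rho (bloch_of rho).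
Proof.
move=> tr_rho; split=> [I _|p].
  apply: span_sum => q _; apply: spanZ; apply: span1.
  by exists (fun i => traceless_delta (q.1 i) (q.2 i)); split=> // i _; apply: traceless_delta_tr.
have -> : rho p = \sum_q rho q * (p == q)%:R.
  rewrite (bigD1 p) //= eqxx mulr1 big1 ?addr0 // => q /negbTE.
  by rewrite eq_sym => ->; rewrite mulr0.
under eq_bigr do rewrite matrix_unit_expand big_distrr /=.
rewrite exchange_big (bigD1 set0) //=; congr (_ + _); last first.
  by apply: eq_bigr => J _; apply: eq_bigr => q _; rewrite mulrA.
have diag_weight0 q : diag_weight q set0 = (q.1 == q.2)%:R * 2%:R ^- n.
  rewrite /diag_weight (eq_bigl predT) => [|i]; last by rewrite in_set0.
  by rewrite big_split /= prod_eq_idx prodr_const card_ord exprVn.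
have traceless_tensor0 q : traceless_tensor q set0 = idop.
  rewrite /traceless_tensor emb_tensorE idop_tensor; congr tensor_op.
  by apply: functional_extensionality => i; rewrite in_set0.
under eq_bigr do rewrite diag_weight0 traceless_tensor0 mulrA mulrA.
by rewrite -!big_distrl /= -optraceE tr_rho mul1r.
Qed.

Lemma mx_pair_traceless_delta x a b :
  \tr x = 0 -> mx_pair x (traceless_delta a b) = x a b.
Proof.
rewrite mxtrace2 /mx_pair !sum_ord2 !mxE => /addr0_eq x11.
by case: (ord2_cases a) => ->; case: (ord2_cases b) => -> /=; rewrite -x11; field.
Qed.

Lemma op_pair_traceless_tensor (I J : {set 'I_n}) (A : op) (p : idx * idx) :
  V_I I A -> (forall i, i \notin J -> p.1 i = p.2 i) ->
  op_pair A (traceless_tensor p J) = (if I == J then 2%:R ^+ #|~: J| else 0) * A p.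
Proof.
move=> VA diagJ; apply: span_pair VA => _ [z [slz ->]].
rewrite -[LHS]/(op_pair (emb_tensor I z) (traceless_tensor p J)).
rewrite /traceless_tensor !emb_tensorE op_pair_tensor.
have [eq_IJ|neq_IJ] := eqVneq I J.
  subst I.
  transitivity (\prod_i ((if i \in J then 1 else 2%:R) *
                         (if i \in J then z i else 1%:M) (p.1 i) (p.2 i))).
    apply: eq_bigr => i _; case: ifP => iJ.
      by rewrite mul1r mx_pair_traceless_delta ?slz.
    by rewrite mx_pair1r mxtrace1 mxE diagJ ?iJ // eqxx mulr1.
  rewrite big_split /=; congr (_ * _).
  rewrite (eq_bigr (fun i => if i \notin J then 2%:R else 1)) -?big_mkcond /=; last first.
    by move=> i _; case: (i \in J).
  by rewrite prodr_const; congr (_ ^+ _); apply: eq_card => i; rewrite !inE.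
rewrite mul0r; have [subIJ|/subsetPn [i iI niJ]] := boolP (I \subset J); last first.
  by rewrite (bigD1 i) //= iI (negbTE niJ) mx_pair1r slz // mul0r.
have /subsetPn [i iJ niI] : ~~ (J \subset I).
  by apply: contra neq_IJ => subJI; rewrite eqEsubset subIJ subJI.
by rewrite (bigD1 i) //= (negbTE niI) iJ mx_pairC mx_pair1r traceless_delta_tr mul0r.
Qed.

Lemma V_I_eq0 (J : {set 'I_n}) (A : op) (p : idx * idx) i :
  V_I J A -> i \notin J -> p.1 i != p.2 i -> A p = 0.
Proof.
move=> VA niJ neq_i; apply: span_eval0 VA => _ [z [_ ->]].
by rewrite /emb_tensor (bigD1 i) //= (negbTE niJ) (negbTE neq_i) mul0r.
Qed.

Lemma V_I_direct_sum (s : {set 'I_n} -> op) :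
  (forall I, I != set0 -> V_I I (s I)) -> (forall p, \sum_(I | I != set0) s I p = 0) ->
  forall J p, J != set0 -> s J p = 0.
Proof.
move=> Vs sum0 J p J0.
have [/existsP [i /andP [niJ neq_i]]|/existsPn diagJ] :=
  boolP [exists i, (i \notin J) && (p.1 i != p.2 i)].
  exact: V_I_eq0 (Vs J J0) niJ neq_i.
have {}diagJ i : i \notin J -> p.1 i = p.2 i.
  by move=> niJ; apply/eqP; move: (diagJ i); rewrite niJ negbK.
have : \sum_(I | I != set0) op_pair (s I) (traceless_tensor p J) = 0.
  rewrite /op_pair exchange_big /= big1 // => q _.
  by rewrite -big_distrl /= sum0 mul0r.
rewrite (bigD1 J) //= big1 ?addr0 => [|I /andP [I0 neq_IJ]]; last first.
  by rewrite (op_pair_traceless_tensor (Vs I I0) diagJ) (negbTE neq_IJ) mul0r.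
rewrite (op_pair_traceless_tensor (Vs J J0) diagJ) eqxx => /eqP.
by rewrite mulf_eq0 expf_eq0 (negbTE two_neq0) andbF => /eqP.
Qed.

Lemma bloch_vector_unique (rho : op) r r' : bloch_vector rho r -> bloch_vector rho r' ->
  forall J, J != set0 -> r J = r' J.
Proof.
move=> [Vr er] [Vr' er'] J J0; apply: functional_extensionality => p.
apply/eqP; rewrite -subr_eq0; apply/eqP; move: J p J0.
apply: (V_I_direct_sum (s := fun I q => r I q - r' I q)) => [I I0|q].
  by apply: spanD (Vr I I0) _; apply: span_ext (spanZ (-1) (Vr' I I0)) => t; rewrite mulN1r.
rewrite sumrB; apply/eqP; rewrite subr_eq0; apply/eqP.
by apply: (addrI (2%:R ^- n * idop q)); rewrite -er -er'.
Qed.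

Lemma pauliZ_sl2 : sl2 pauliZ.
Proof. by rewrite /sl2 mxtrace2 !mxE /= subrr. Qed.

Lemma pauliZ_form : form pauliZ pauliZ = 1.
Proof.
by rewrite /form mx2_traceless_sqr expr1n mul0r addr0 mxtrace1 divff.
Qed.

Lemma traceless_delta_long a : long_line pauliZ (traceless_delta a a).
Proof.
exists (if a == 0 then 2%:R^-1 else - 2%:R^-1); apply/matrixP => i j; rewrite !mxE.
by case: (ord2_cases a) => ->; case: (ord2_cases i) => ->; case: (ord2_cases j) => -> /=; field.
Qed.

Lemma traceless_delta_trans a b : a != b -> trans_space pauliZ (traceless_delta a b).
Proof.
move=> neq_ab; split; first exact: traceless_delta_tr.
rewrite /form mxtrace2 !mulmx2E !mxE; move: neq_ab.
by case: (ord2_cases a) => ->; case: (ord2_cases b) => -> //= _; field.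
Qed.

Lemma pauliZ_trans_diag x a : trans_space pauliZ x -> x a a = 0.
Proof.
rewrite /trans_space /sl2 /form !mxtrace2 !mulmx2E !mxE /= => -[tr0 /eqP].
rewrite mulf_eq0 invr_eq0 (negbTE two_neq0) orbF => /eqP f0.
have /eqP : 2%:R * x 0 0 = 0.
  by rewrite -[RHS](addr0 0) -{1}tr0 -f0; ring.
rewrite mulf_eq0 (negbTE two_neq0) /= => /eqP x00.
by case: (ord2_cases a) => ->; rewrite // -(addr0_eq tr0) x00 oppr0.
Qed.

Lemma pauliZ_long_offdiag x a b : long_line pauliZ x -> a != b -> x a b = 0.
Proof.
move=> [c ->]; rewrite !mxE.
by case: (ord2_cases a) => ->; case: (ord2_cases b) => -> //= _; rewrite mulr0.
Qed.

Lemma bloch_of_in_X (rho : op) : parity_even rho -> in_X (fun _ => pauliZ) (bloch_of rho).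
Proof.
move=> even_rho I _; apply: span_sum => q _.
have [subDI|] := boolP ([set i | q.1 i != q.2 i] \subset I); last first.
  case/subsetPn => i; rewrite inE => neq_i niI; apply: span_eq0 => p.
  by rewrite /diag_weight (bigD1 i) //= (negbTE neq_i) !mul0r mulr0 mul0r.
have [eq_par|neq_par] := eqVneq (parity q.1) (parity q.2); last first.
  by apply: span_eq0 => p; case: q neq_par {subDI} => x y /= /even_rho ->; rewrite !mul0r.
apply: spanZ; apply: span1.
exists (fun i => traceless_delta (q.1 i) (q.2 i)), [set i | q.1 i != q.2 i]; split=> //.
  by rewrite -odd_card_diff eq_par addbb.
move=> i _; rewrite inE; case: eqVneq => [eq_i|neq_i] /=.
  by rewrite eq_i; apply: traceless_delta_long.
exact: traceless_delta_trans.
Qed.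

Lemma V_I_e_pauliZ_even I (A : op) : V_I_e (fun _ => pauliZ) I A -> parity_even A.
Proof.
move=> VA x y neq_par; apply: span_eval0 VA => _ [z [T [subTI evenT zT ->]]].
have [i neq_DT] : exists i, (x i != y i) != (i \in T).
  apply/existsP; apply: contraR evenT => /existsPn eqDT.
  suff -> : T = [set i | x i != y i].
    by rewrite -odd_card_diff; case: (parity x) (parity y) neq_par => [] [].
  by apply/setP => i; rewrite inE; move: (eqDT i); rewrite negbK => /eqP.
rewrite /emb_tensor (bigD1 i) //=.
suff -> : (if i \in I then z i (x i) (y i) else (x i == y i)%:R) = 0 by rewrite mul0r.
case: (boolP (i \in T)) neq_DT => iT /=.
  case: (x i =P y i) => // -> _; rewrite (subsetP subTI i iT).
  by apply: pauliZ_trans_diag; move: (zT i (subsetP subTI i iT)); rewrite iT.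
case: (x i =P y i) => // /eqP neq_i _; case: ifP => iI //.
by apply: pauliZ_long_offdiag neq_i; move: (zT i iI); rewrite (negbTE iT).
Qed.

Lemma X_state_in_X (rho : op) : L_state rho -> is_X_state rho ->
  exists v, longitudinal v /\ forall r, bloch_vector rho r -> in_X v r.
Proof.
move=> tr_rho [P [unitP presP]]; pose Q i := invmx (P i).
have PQ i : P i *m Q i = 1%:M by rewrite mulmxV.
have QP i : Q i *m P i = 1%:M by rewrite mulVmx.
pose sig := op_conj Q P rho.
have tr_sig : L_state sig by rewrite /L_state optrace_conj.
have even_sig : parity_even sig := preserves_parity_even PQ presP.
exists (fun i => P i *m pauliZ *m Q i); split.
  move=> i; split; first by rewrite /sl2 mxtrace_conj // pauliZ_sl2.
  by rewrite form_conj // pauliZ_form oner_eq0.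
move=> r br J J0.
have <- : op_conj P Q (bloch_of sig J) = r J.
  have b_sig := bloch_of_bloch_vector tr_sig.
  by rewrite (bloch_vector_unique b_sig (bloch_vector_conj QP br) J0) op_conjK.
exact (V_I_e_conj PQ (bloch_of_in_X even_sig J0)).
Qed.

End Bloch.

Section AlgebraicallyClosed.
Variable C : numClosedFieldType.
Local Notation pauliZ := (@pauliZ C).

Let two_neq0 : (2%:R : C) != 0. Proof. by rewrite pnatr_eq0. Qed.

Lemma traceless_similar_pauliZ (v : 'M[C]_2) : \tr v = 0 -> form v v != 0 ->
  exists P l, [/\ P \in unitmx, l != 0 & invmx P *m v *m P = l *: pauliZ].
Proof.
rewrite mxtrace2 => /addr0_eq trv0 fv0.
have vE : v = mx2 (v 0 0) (v 0 1) (v 1 0) (- v 0 0) by rewrite trv0 -mx2_eta.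
move: (v 0 0) (v 0 1) (v 1 0) vE fv0 => a b c -> {trv0 v}.
rewrite /form mx2_traceless_sqr mxtrace_scalar => fv0.
have mu0 : a ^+ 2 + b * c != 0 by apply: contra fv0 => /eqP ->; rewrite mul0rn mul0r.
have [l [l2 l0 la0]] : exists l, [/\ l ^+ 2 = a ^+ 2 + b * c, l != 0 & l + a != 0].
  pose s := sqrtC (a ^+ 2 + b * c); have s2 : s ^+ 2 = a ^+ 2 + b * c by rewrite sqrtCK.
  have s0 : s != 0 by apply: contra mu0 => /eqP s0; rewrite -s2 s0 expr0n.
  have [sa0|] := eqVneq (s + a) 0; last by exists s.
  exists (- s); split; rewrite ?sqrrN ?oppr_eq0 //.
  by rewrite -(addr0_eq sa0) -opprD oppr_eq0 -mulr2n mulrn_eq0 negb_or s0.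
(* The columns of P are eigenvectors of v for l and -l, and P is traceless, so
   P *m P = d%:M; the sign of l was chosen so that d = 2 l (l + a) is nonzero. *)
pose P := mx2 (l + a) b c (- (l + a)); pose d := (l + a) ^+ 2 + b * c.
have d0 : d != 0.
  have -> : d = 2%:R * l * (l + a) by rewrite /d; ring: l2.
  by rewrite !mulf_neq0.
have PP : P *m P = d%:M by apply: mx2_traceless_sqr.
have unitP : P \in unitmx.
  have PQ : P *m (d^-1 *: P) = 1%:M by rewrite -scalemxAr PP scale_scalar_mx mulVf.
  by case: (mulmx1_unit PQ).
have vP : mx2 a b c (- a) *m P = P *m (l *: pauliZ).
  apply/matrixP => i j; rewrite !mulmx2E !mxE.
  by case: (ord2_cases i) => ->; case: (ord2_cases j) => -> /=; ring: l2.
exists P, l; split=> //.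
by rewrite -mulmxA vP mulmxA mulVmx // mul1mx.
Qed.

Lemma in_X_X_state n (rho : op C n) : L_state rho ->
  (exists v, longitudinal v /\ forall r, bloch_vector rho r -> in_X v r) -> is_X_state rho.
Proof.
move=> tr_rho [v [long_v in_Xv]].
have /fin_all_exists [P /fin_all_exists [l Pl]] : forall i, exists P l,
    [/\ P \in unitmx, l != 0 & invmx P *m v i *m P = l *: pauliZ].
  by move=> i; have [slv fv] := long_v i; apply: traceless_similar_pauliZ.
pose Q i := invmx (P i).
have PQ i : P i *m Q i = 1%:M by rewrite mulmxV //; case: (Pl i).
have QP i : Q i *m P i = 1%:M by rewrite mulVmx //; case: (Pl i).
exists P; split=> [i|]; first by case: (Pl i).
apply: (even_preserves_parity PQ).
have b_rho := bloch_of_bloch_vector two_neq0 tr_rho.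
apply: (bloch_parity_even (bloch_vector_conj QP b_rho)) => I I0.
apply: (V_I_e_pauliZ_even two_neq0); apply: (V_I_e_scale (l := l)) => [i|]; first by case: (Pl i).
have -> : (fun i => l i *: pauliZ) = (fun i => Q i *m v i *m P i).
  by apply: functional_extensionality => i; case: (Pl i).
exact (V_I_e_conj QP (in_Xv _ b_rho I I0)).
Qed.

End AlgebraicallyClosed.

Unset Implicit Arguments.

Theorem lemma4p7 (R : realType) (n : nat) (rho : op R[i] n) :
  L_state rho ->
  (is_X_state rho <->
   exists v : 'I_n -> 'M[R[i]]_2,
     longitudinal v /\ forall r, bloch_vector rho r -> in_X v r).
Proof.
move=> tr_rho; split; last exact: in_X_X_state.
by apply: X_state_in_X; rewrite // pnatr_eq0.
Qed.
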